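(* Let $f=a_0+ a_{1}z+\cdots+a_m z^m\in \mathbb{Z}[z]$ be primitive (the greatest common divisor of its coefficients is $1$). Suppose there exists a positive real number $\alpha$ such that \[ |a_m| \alpha^m>|a_0|+|a_1|\alpha+\cdots+|a_{m-1}|\alpha^{m-1}. \] If there exist natural numbers $n$ and $d$ with $n\geq \alpha+ d$ such that either $|f(n)|/d$ is a prime, or $|f(n)|/d$ is a prime power coprime to $|f'(n)|$, then $f$ is irreducible in $\mathbb{Z}[z]$.
   Context: $f'$ denotes the derivative of $f$. Natural numbers are positive integers. *)

From HB Require Import structures.
From mathcomp Require Import all_boot all_order all_algebra.
From mathcomp Require Import reals.
Set Implicit Arguments. Unset Strict Implicit. Unset Printing Implicit Defensive.
Import Order.TTheory GRing.Theory Num.Theory.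
Local Open Scope ring_scope.

Definition primitive_intpoly (f : {poly int}) : Prop :=
  \big[gcdn/0%N]_(i < size f) absz (f`_i) = 1%N.

Definition irreducible_in_Zz (f : {poly int}) : Prop :=
  f != 0 /\ f \isn't a GRing.unit /\
  forall g h : {poly int}, f = g * h -> g \is a GRing.unit \/ h \is a GRing.unit.

Definition prime_power (q : nat) : Prop :=
  exists p k : nat, prime p /\ (0 < k)%N /\ q = (p ^ k)%N.

(* Every complex root z of f satisfies |z| < alpha: otherwise the leading term
   |a_m z^m| would dominate the others.  If g is a nonconstant factor of f in
   Z[z], then g(n) = lead(g) * prod (n - z) over the roots z of g, which are
   roots of f, so each factor exceeds n - alpha >= d and |g(n)| > d.  Primitivity makes constant
   factors units.  If f = g h with g, h nonconstant, the prime (power)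
   q = |f(n)|/d divides g(n) or h(n) -- in the prime power case because a prime
   dividing both would divide f'(n) = g'(n) h(n) + g(n) h'(n) -- say g(n) = k q,
   and then k |h(n)| = d forces |h(n)| <= d. *)
From HB Require Import structures.
From mathcomp Require Import all_boot all_order all_algebra.
From mathcomp Require Import reals complex.
Import Order.TTheory GRing.Theory Num.Theory.
Local Open Scope ring_scope.

Lemma root_norm_lt (C : numDomainType) (p : {poly C}) (a z : C) :
  0 < a ->
  \sum_(i < (size p).-1) `|p`_i| * a ^+ i < `|lead_coef p| * a ^+ (size p).-1 ->
  root p z -> `|z| < a.
Proof.
move=> a_gt0 dom_lead pz0.
have p_neq0 : p != 0.
  by apply: contraTneq dom_lead => ->; rewrite lead_coef0 normr0 mul0r size_poly0 big_ord0 ltxx.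
set m := (size p).-1 in dom_lead.
have size_p : size p = m.+1 by rewrite prednK ?size_poly_gt0.
rewrite real_ltNge ?normr_real ?gtr0_real //; apply/negP => a_le_z.
set t := `|z| in a_le_z.
have t_ge0 : 0 <= t := normr_ge0 z.
have lead_le : `|lead_coef p| * t ^+ m <= \sum_(i < m) `|p`_i| * t ^+ i.
  move: pz0; rewrite /root horner_coef size_p big_ord_recr /= addrC addr_eq0.
  move=> /eqP lead_eq.
  rewrite lead_coefE size_p /t -normrX -normrM lead_eq normrN.
  by apply: le_trans (ler_norm_sum _ _ _) _; apply: ler_sum => i _; rewrite normrM normrX.
have lower_le : (\sum_(i < m) `|p`_i| * t ^+ i) * a ^+ m
                <= (\sum_(i < m) `|p`_i| * a ^+ i) * t ^+ m.
  rewrite !mulr_suml; apply: ler_sum => -[i /= /ltnW le_im] _.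
  have a_ge0 := ltW a_gt0.
  rewrite -(subnKC le_im) !exprD -!mulrA ler_wpM2l // mulrCA ler_wpM2l ?exprn_ge0 //.
  by rewrite ler_wpM2l ?exprn_ge0 // lerXn2r.
have lower_lt : (\sum_(i < m) `|p`_i| * a ^+ i) * t ^+ m
                < (`|lead_coef p| * a ^+ m) * t ^+ m.
  by rewrite ltr_pM2r // exprn_gt0 // (lt_le_trans a_gt0).
have lead_le' := ler_wpM2r (exprn_ge0 m (ltW a_gt0)) lead_le.
have := le_lt_trans (le_trans lead_le' lower_le) lower_lt.
by rewrite mulrAC ltxx.
Qed.

Lemma norm_horner_gt (C : numClosedFieldType) (p : {poly C}) (x D : C) :
  (1 < size p)%N -> 1 <= `|lead_coef p| -> 1 <= D ->
  (forall z, root p z -> D < `|x - z|) -> D < `|p.[x]|.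
Proof.
move=> size_p lead_ge1 D_ge1 far_roots.
have lead_neq0 : lead_coef p != 0.
  by rewrite lead_coef_eq0 -size_poly_gt0 ltnW.
have [[|z r] p_eq] := closed_field_poly_normal p.
  by move: size_p; rewrite p_eq big_nil size_scale // size_poly1.
have pz0 : root p z by rewrite p_eq rootZ // root_prod_XsubC mem_head.
have prod_ge1 : 1 <= \prod_(y <- r) `|x - y|.
  rewrite big_seq; apply: (big_ind (fun v => 1 <= v)) => [||y y_r];
    [exact: lexx | exact: mulr_ege1 |].
  apply/ltW/(le_lt_trans D_ge1)/far_roots.
  by rewrite p_eq rootZ // root_prod_XsubC mem_behead.
rewrite p_eq hornerZ horner_prod big_cons !normrM hornerXsubC normr_prod.
under eq_bigr do rewrite hornerXsubC.
apply: (lt_le_trans (far_roots z pz0)).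
by rewrite mulrCA ler_peMr // mulr_ege1.
Qed.

Lemma factor_value_gt (C : numClosedFieldType) (f g h : {poly int}) (a : C) (n d : nat) :
  0 < a ->
  \sum_(i < (size f).-1) (`|f`_i|)%:~R * a ^+ i
    < (`|lead_coef f|)%:~R * a ^+ (size f).-1 ->
  (0 < d)%N -> a + d%:R <= n%:R -> f = g * h -> (1 < size g)%N ->
  (d < `|g.[n%:Z]|)%N.
Proof.
move=> a_gt0 dom_lead d_gt0 an_le fgh size_g.
pose toC := map_poly (intr : int -> C).
have size_toC p : size (toC p) = size p by rewrite size_map_inj_poly //; apply: intr_inj.
have lead_toC p : lead_coef (toC p) = (lead_coef p)%:~R.
  by rewrite lead_coef_map_inj //; apply: intr_inj.
have root_g_lt z : root (toC g) z -> `|z| < a.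
  move=> gz0; apply: (@root_norm_lt _ (toC f) _ _ a_gt0).
    rewrite size_toC lead_toC -intr_norm.
    by under eq_bigr do rewrite coef_map -intr_norm.
  by rewrite /toC fgh rmorphM rootM gz0.
rewrite -(ltr_nat C) natr_absz intr_norm -horner_map.
apply: norm_horner_gt; rewrite ?size_toC ?lead_toC -?intr_norm ?ler1n //.
  by rewrite absz_gt0 lead_coef_eq0 -size_poly_gt0 ltnW.
move=> z /root_g_lt z_lt_a.
rewrite pmulrn (lt_le_trans _ (lerB_dist _ _)) // normr_nat ltrBrDr.
by apply: lt_le_trans an_le; rewrite addrC ltrD2r.
Qed.

Lemma unitz_absz (m : int) : (m \is a GRing.unit) = (`|m| == 1)%N.
Proof. by case: m => [[|[|m]]|[|m]]. Qed.

Lemma absz_horner_unit (u : {poly int}) :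
  u \is a GRing.unit -> forall x, `|u.[x]|%N = 1%N.
Proof.
by move=> u_unit x; have /= := rmorph_unit (horner_eval x) u_unit; rewrite unitz_absz => /eqP.
Qed.

Lemma primitive_const_factor_unit (f g h : {poly int}) :
  primitive_intpoly f -> f = g * h -> (size g <= 1)%N -> g \is a GRing.unit.
Proof.
move=> prim_f fgh /size1_polyC g_eq; set c := g`_0 in g_eq.
have : (`|c| %| 1)%N.
  rewrite -prim_f; apply/dvdn_biggcdP => i _; move: (val i) => j.
  by rewrite fgh g_eq coefCM abszM dvdn_mulr.
rewrite dvdn1 => /eqP c_abs1.
by rewrite g_eq poly_unitE size_polyC coefC /= unitz_absz -absz_eq0 c_abs1.
Qed.

Lemma leq_cofactor {G H d q : nat} :
  (G * H = d * q)%N -> (q %| G)%N -> (0 < G)%N -> (H <= d)%N.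
Proof.
move=> GH_eq /dvdnP [k G_eq] G_gt0.
have q_gt0 : (0 < q)%N by move: G_gt0; rewrite G_eq muln_gt0 => /andP [].
have kH_eq : (k * H = d)%N by apply/eqP; rewrite -(eqn_pmul2r q_gt0) mulnAC -G_eq GH_eq.
by rewrite -kH_eq leq_pmull //; move: G_gt0; rewrite G_eq muln_gt0 => /andP [].
Qed.

Lemma prime_power_dvdn_factor {p k G H : nat} :
  prime p -> (p ^ k %| G * H)%N -> ~~ (p %| G)%N || ~~ (p %| H)%N ->
  (p ^ k %| G)%N || (p ^ k %| H)%N.
Proof.
move=> p_prime dvd_GH /orP [pG | pH].
  by move: dvd_GH; rewrite Gauss_dvdr ?coprimeXl ?prime_coprime // => ->; rewrite orbT.
by move: dvd_GH; rewrite Gauss_dvdl ?coprimeXl ?prime_coprime // => ->.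
Qed.

Lemma dvdz_horner_derivM (c x : int) (g h : {poly int}) :
  (c %| g.[x])%Z -> (c %| h.[x])%Z -> (c %| (g * h)^`().[x])%Z.
Proof.
move=> cg ch; rewrite derivM hornerD !hornerM.
by apply: rpredD; [apply: dvdz_mull | apply: dvdz_mulr].
Qed.

Lemma value_cofactor_splits (f : {poly int}) (x : int) (d : nat) :
  (exists p : nat, prime p /\ `|f.[x]|%N = (d * p)%N) \/
  (exists q : nat, prime_power q /\ `|f.[x]|%N = (d * q)%N /\
                   coprime q `|(f^`()).[x]|%N) ->
  exists2 q : nat, (1 < q)%N & (`|f.[x]| = d * q)%N /\
    forall g h, f = g * h -> (q %| `|g.[x]|)%N || (q %| `|h.[x]|)%N.
Proof.
have dvd_value q g h :
    `|f.[x]|%N = (d * q)%N -> f = g * h -> (q %| `|g.[x]| * `|h.[x]|)%N.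
  by move=> f_eq fgh; rewrite -abszM -hornerM -fgh f_eq dvdn_mull.
case=> [[p [p_prime f_eq]] | [_ [[p [k [p_prime [k_gt0 ->]]]] [f_eq cop]]]].
  exists p; first exact: prime_gt1.
  by split=> // g h fgh; rewrite -Euclid_dvdM ?dvd_value.
exists (p ^ k)%N; first by rewrite -(exp1n k) ltn_exp2r ?prime_gt1.
split=> // g h fgh.
apply: (prime_power_dvdn_factor p_prime (dvd_value _ _ _ f_eq fgh)).
rewrite -negb_and; apply: contraL cop => /andP [pg ph].
have : ~~ coprime p `|(f^`()).[x]|%N.
  rewrite prime_coprime // negbK -(absz_nat p) -dvdzE fgh.
  by rewrite dvdz_horner_derivM // dvdzE absz_nat.
by apply: contra => /(coprime_dvdl (dvdn_exp k_gt0 (dvdnn p))).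
Qed.

Lemma factor_value_gt_real (R : rcfType) (f g h : {poly int}) (a : R) (n d : nat) :
  0 < a ->
  \sum_(i < (size f).-1) (`|f`_i|)%:~R * a ^+ i
    < (`|lead_coef f|)%:~R * a ^+ (size f).-1 ->
  (0 < d)%N -> a + d%:R <= n%:R -> f = g * h -> (1 < size g)%N ->
  (d < `|g.[n%:Z]|)%N.
Proof.
move=> a_gt0 dom_lead d_gt0 an_le; apply: (@factor_value_gt R[i] _ _ _ (a%:C)%C).
- by rewrite ltcR.
- move: dom_lead; rewrite -ltcR rmorph_sum rmorphM rmorphXn rmorph_int.
  by under eq_bigr do rewrite rmorphM rmorphXn rmorph_int.
- by [].
- by move: an_le; rewrite -lecR rmorphD !rmorph_nat.
Qed.

Theorem corollary4 (R : realType) (f : {poly int}) (alpha : R) (n d : nat) :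
  primitive_intpoly f ->
  0 < alpha ->
  \sum_(i < (size f).-1) (`|f`_i|)%:~R * alpha ^+ i
    < (`|lead_coef f|)%:~R * alpha ^+ (size f).-1 ->
  (0 < n)%N -> (0 < d)%N ->
  alpha + d%:R <= n%:R ->
  ((exists p : nat, prime p /\ `|f.[n%:Z]|%N = (d * p)%N) \/
   (exists q : nat, prime_power q /\ `|f.[n%:Z]|%N = (d * q)%N /\
                    coprime q `|(f^`()).[n%:Z]|%N)) ->
  irreducible_in_Zz f.
Proof.
move=> prim_f a_gt0 dom_lead _ d_gt0 an_le.
case/value_cofactor_splits => q q_gt1 [f_eq q_splits].
have big_factor g h : f = g * h -> (1 < size g)%N -> (d < `|g.[n%:Z]|)%N.
  exact: factor_value_gt_real a_gt0 dom_lead d_gt0 an_le.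
split; [|split].
- by apply/eqP => f0; move: prim_f; rewrite /primitive_intpoly f0 size_poly0 big_ord0.
- apply/negP => /absz_horner_unit/(_ n%:Z)/eqP; rewrite f_eq muln_eq1 => /andP [_ /eqP q1].
  by rewrite q1 in q_gt1.
move=> g h fgh.
have [g_small|g_big] := leqP (size g) 1.
  by left; apply: primitive_const_factor_unit fgh g_small.
have hg : f = h * g by rewrite mulrC.
have [h_small|h_big] := leqP (size h) 1.
  by right; apply: primitive_const_factor_unit hg h_small.
have g_gt := big_factor _ _ fgh g_big; have h_gt := big_factor _ _ hg h_big.
have GH_eq : (`|g.[n%:Z]| * `|h.[n%:Z]| = d * q)%N by rewrite -abszM -hornerM -fgh.
exfalso; case/orP: (q_splits _ _ fgh) => [qg | qh].
  by move: h_gt; rewrite ltnNge (leq_cofactor GH_eq qg (leq_trans (ltn0Sn d) g_gt)).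
by move: g_gt; rewrite ltnNge (leq_cofactor _ qh (leq_trans (ltn0Sn d) h_gt)) // mulnC.
Qed.
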